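(* Let $i\geq 1$ and $n\geq 1$. Let $T(i,n)$ be the set of pairs $(L_1,L_2)$ of walks of length $n$ with steps $(1,1)$ and $(1,-1)$, where $L_1$ starts at $(0,0)$ and $L_2$ starts at $(0,2i)$, such that $L_1$ and $L_2$ share no common point before they reach a common ending point at $x=n$. Let $P(i,n)$ be the set of lattice paths of length $2n$ with steps $(1,1)$ and $(1,-1)$ starting at $(0,2i)$ that end on the $x$-axis and do not touch the $x$-axis at any earlier point (hence never go below it). Then there exists a bijection between $T(i,n)$ and $P(i,n)$. *)

From mathcomp Require Import all_boot all_order all_algebra.
Set Implicit Arguments. Unset Strict Implicit. Unset Printing Implicit Defensive.
Import Order.TTheory GRing.Theory Num.Theory.
Local Open Scope ring_scope.

(* A walk is a sequence of steps: true = (1,1), false = (1,-1). *)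
Definition step (b : bool) : int := if b then 1 else -1.

Definition height (h0 : int) (s : seq bool) (k : nat) : int :=
  h0 + \sum_(j < k) step (nth false s j).

Definition inTpair (i n : nat) (p : n.-tuple bool * n.-tuple bool) : bool :=
  [forall k : 'I_n, height 0 p.1 k != height (2 * i)%N%:Z p.2 k]
  && (height 0 p.1 n == height (2 * i)%N%:Z p.2 n).

Definition inPpath (i n : nat) (s : (2 * n).-tuple bool) : bool :=
  [forall k : 'I_(2 * n), height (2 * i)%N%:Z s k != 0]
  && (height (2 * i)%N%:Z s (2 * n) == 0).

Arguments inTpair i n p : clear implicits.
Arguments inPpath i n s : clear implicits.

From mathcomp Require Import all_boot all_order all_algebra zify ring.
Set Implicit Arguments. Unset Strict Implicit. Unset Printing Implicit Defensive.
Import Order.TTheory GRing.Theory Num.Theory.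
Local Open Scope ring_scope.

(* Interleave the two walks into one of length 2n: step 2k is the k-th step
   of L2 and step 2k+1 is the reversed k-th step of L1.  After 2k steps the
   new path, started at height 2i, is at height L2(k) - L1(k), so it hits the
   x-axis at an even time exactly when L1 and L2 meet.  At odd times its
   height is odd, hence never 0.  Splitting a path into its even and
   (reversed) odd steps is the inverse map. *)

Lemma bijective_sig (A B : Type) (P : pred A) (Q : pred B)
    (f : A -> B) (g : B -> A) :
  cancel f g -> cancel g f ->
  (forall x, P x -> Q (f x)) -> (forall y, Q y -> P (g y)) ->
  exists h : {x | P x} -> {y | Q y}, bijective h.
Proof.
move=> fK gK PQ QP.
exists (fun x => exist _ (f (val x)) (PQ _ (valP x))).
exists (fun y => exist _ (g (val y)) (QP _ (valP y))).
  by move=> x; apply: val_inj; rewrite /= fK.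
by move=> y; apply: val_inj; rewrite /= gK.
Qed.

Definition interleave (a b : seq bool) (n : nat) : seq bool :=
  mkseq (fun j => if odd j then ~~ nth false a j./2 else nth false b j./2) (2 * n).

Definition even_steps (s : seq bool) (n : nat) : seq bool :=
  mkseq (fun k => nth false s k.*2) n.

Definition odd_steps (s : seq bool) (n : nat) : seq bool :=
  mkseq (fun k => ~~ nth false s k.*2.+1) n.

Lemma interleaveK s n :
  size s = (2 * n)%N -> interleave (odd_steps s n) (even_steps s n) n = s.
Proof.
move=> size_s; apply: (@eq_from_nth _ false); first by rewrite size_mkseq size_s.
move=> j; rewrite size_mkseq => lt_j; rewrite nth_mkseq //.
have lt_half_j : (j./2 < n)%N by rewrite ltn_half_double -mul2n.
by case: ifP => odd_j; rewrite nth_mkseq // ?negbK -[in RHS](odd_double_half j) odd_j.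
Qed.

Lemma odd_steps_interleave a b n : size a = n -> odd_steps (interleave a b n) n = a.
Proof.
move=> size_a; apply: (@eq_from_nth _ false); first by rewrite size_mkseq size_a.
move=> k; rewrite size_mkseq => lt_k; rewrite !nth_mkseq //; last by lia.
by rewrite /= odd_double /= uphalf_double negbK.
Qed.

Lemma even_steps_interleave a b n : size b = n -> even_steps (interleave a b n) n = b.
Proof.
move=> size_b; apply: (@eq_from_nth _ false); first by rewrite size_mkseq size_b.
move=> k; rewrite size_mkseq => lt_k; rewrite !nth_mkseq //; last by lia.
by rewrite odd_double doubleK.
Qed.

Lemma sum_step_interleave a b n k : (k <= n)%N ->
  \sum_(j < k.*2) step (nth false (interleave a b n) j) =
  \sum_(j < k) step (nth false b j) - \sum_(j < k) step (nth false a j).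
Proof.
elim: k => [|k IHk] le_k; first by rewrite !big_ord0 subr0.
rewrite doubleS !big_ord_recr /= IHk; last by lia.
rewrite !nth_mkseq; try by rewrite -mul2n; lia.
rewrite /= odd_double /= uphalf_double doubleK.
by case: (nth false a k); case: (nth false b k); rewrite /step /=; ring.
Qed.

Lemma sum_step_parity s m :
  exists c : int, \sum_(j < m) step (nth false s j) = m%:Z - 2 * c.
Proof.
elim: m => [|m [c IHm]]; first by exists 0; rewrite big_ord0; ring.
rewrite big_ord_recr /= IHm /step.
by case: (nth false s m); [exists c | exists (c + 1)]; lia.
Qed.

Lemma height_double_odd_neq0 i s m : height (2 * i)%N%:Z s m.*2.+1 != 0.
Proof.
rewrite /height; have [c ->] := sum_step_parity s m.*2.+1.
by apply/eqP; rewrite -mul2n; lia.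
Qed.

Lemma height_interleave_double_eq0 h0 a b n k : (k <= n)%N ->
  (height h0 (interleave a b n) k.*2 == 0) = (height 0 a k == height h0 b k).
Proof.
move=> le_k; rewrite [RHS]eq_sym -[RHS]subr_eq0.
suff -> : height h0 (interleave a b n) k.*2 = height h0 b k - height 0 a k by [].
by rewrite /height sum_step_interleave //; ring.
Qed.

Section TuplePaths.
Variable n : nat.

Definition interleave_tuple (p : n.-tuple bool * n.-tuple bool) : (2 * n).-tuple bool :=
  Tuple (introT eqP (size_mkseq _ (2 * n)) : size (interleave p.1 p.2 n) == _).

Definition split_tuple (s : (2 * n).-tuple bool) : n.-tuple bool * n.-tuple bool :=
  (Tuple (introT eqP (size_mkseq _ n) : size (odd_steps s n) == _),
   Tuple (introT eqP (size_mkseq _ n) : size (even_steps s n) == _)).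

Lemma interleave_tupleK : cancel interleave_tuple split_tuple.
Proof.
case=> a b; congr pair; apply: val_inj => /=.
  by rewrite odd_steps_interleave // size_tuple.
by rewrite even_steps_interleave // size_tuple.
Qed.

Lemma split_tupleK : cancel split_tuple interleave_tuple.
Proof. by move=> s; apply: val_inj; rewrite /= interleaveK // size_tuple. Qed.

Lemma inPpath_interleave i p : inPpath i n (interleave_tuple p) = inTpair i n p.
Proof.
case: p => a b; rewrite /inPpath /inTpair /=.
rewrite [X in height _ _ X]mul2n height_interleave_double_eq0 //; congr andb.
apply/forallP/forallP => [avoid k | apart k].
  have lt_k2 : (k.*2 < 2 * n)%N by rewrite -mul2n ltn_pmul2l.
  by have := avoid (Ordinal lt_k2); rewrite /= height_interleave_double_eq0 // ltnW.
rewrite /= -[nat_of_ord k](odd_double_half k).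
case: (odd k); first by rewrite add1n height_double_odd_neq0.
have lt_half_k : (k./2 < n)%N by rewrite ltn_half_double -mul2n.
by rewrite add0n height_interleave_double_eq0 ?(ltnW lt_half_k) // (apart (Ordinal lt_half_k)).
Qed.

End TuplePaths.

Theorem proposition4p1 (i n : nat) (hi : (1 <= i)%N) (hn : (1 <= n)%N) :
  exists f : {p : n.-tuple bool * n.-tuple bool | inTpair i n p} ->
             {s : (2 * n).-tuple bool | inPpath i n s},
    bijective f.
Proof.
apply: (bijective_sig (@interleave_tupleK n) (@split_tupleK n)).
  by move=> p; rewrite inPpath_interleave.
by move=> s; rewrite -inPpath_interleave split_tupleK.
Qed.
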